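(* Let $p\geq 0$ be an integer, let $T$ be a tree with at least $p$ vertices and $H$ a connected graph with at least $2p$ vertices. Let $V\subseteq V(T(H))$ with $OC(T,V)=V(T)$, and let $V_1,V_2$ be a partition of $V$ with $|V_i|\leq |V(T(H))|-p^2$ for each $i\in\{1,2\}$. Then $T(H)$ has a matching of size $p$ in which the two ends of each edge have different roles with respect to $V_1,V_2$.
   Context: Graph $T(H)$: for a tree $T$ and a graph $H$ with $V(H)=\{1,\dots,m\}$, $T(H)$ has vertices $v^i$ ($v\in V(T)$, $1\le i\le m$); for each $v$ the vertices $v^1,\dots,v^m$ span a copy $H^v$ of $H$, and $u^iv^i$ is an edge for each $i$ whenever $uv\in E(T)$. $OC(T,V)=\{u\in V(T): V(H^u)\cap V\neq\emptyset\}$. Roles with respect to $V_1,V_2$: each vertex of $T(H)$ either belongs to $V_1$, belongs to $V_2$, or belongs to $V(T(H))\setminus V$; these are its three possible roles. *)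

From mathcomp Require Import all_boot.
Set Implicit Arguments. Unset Strict Implicit. Unset Printing Implicit Defensive.

Definition simple_graph (T : finType) (e : rel T) : Prop :=
  symmetric e /\ irreflexive e.

Definition connected_graph (T : finType) (e : rel T) : Prop :=
  0 < #|T| /\ forall x y : T, connect e x y.

Definition acyclic_graph (T : finType) (e : rel T) : Prop :=
  forall c : seq T, uniq c -> 2 < size c -> ~~ cycle e c.

Definition is_tree (T : finType) (e : rel T) : Prop :=
  [/\ simple_graph e, connected_graph e & acyclic_graph e].

(* The graph T(H): vertex v^i is the pair (v, i). *)
Definition TH_adj (T : finType) (eT : rel T) (m : nat) (eH : rel 'I_m)
  (x y : T * 'I_m) : bool :=
  ((x.1 == y.1) && eH x.2 y.2) || ((x.2 == y.2) && eT x.1 y.1).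

Definition OC (T : finType) (m : nat) (V : {set T * 'I_m}) : {set T} :=
  [set u | [exists i : 'I_m, (u, i) \in V]].

Definition role (X : finType) (V1 V2 : {set X}) (x : X) : nat :=
  if x \in V1 then 1 else if x \in V2 then 2 else 0.

Definition is_matching (X : finType) (adj : rel X) (M : seq (X * X)) : bool :=
  all (fun e => adj e.1 e.2) M && uniq (flatten [seq [:: e.1; e.2] | e <- M]).

From mathcomp Require Import all_boot.
From mathcomp Require Import zify.

Set Implicit Arguments.
Unset Strict Implicit.
Unset Printing Implicit Defensive.

(* View V(T(H)) as the grid V(T) x V(H): row u is the copy H^u, column i is
   the copy of T formed by the vertices v^i.  Call a row (column) mixed if one
   of its edges joins two vertices of different roles.  Mixed edges taken from
   p distinct rows, or from p distinct columns, form the required matching.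
   Otherwise fewer than p rows and fewer than p columns are mixed; since H and
   T are connected, the role is constant along every other row and column, so
   it is the same role c on all vertices outside the fewer than p^2 mixed
   cells.  Some unmixed row meets V, so c is the role of V1 or of V2, and that
   class has more than |V(T(H))| - p^2 vertices. *)

Lemma connect_invariant (X : finType) (Y : eqType) (e : rel X) (f : X -> Y) :
  (forall x y, e x y -> f x = f y) -> forall x y, connect e x y -> f x = f y.
Proof.
move=> f_e x y xy.
have closed_fx : closed e [pred z | f z == f x].
  by move=> a b /f_e; rewrite !inE => ->.
by move: (closed_connect closed_fx xy); rewrite !inE eqxx => /esym/eqP.
Qed.

Lemma matching_of_blocks (X K : finType) (key : X -> K) (adj good : rel X)
    (S : {set K}) (p : nat) :
  p <= #|S| ->
  (forall u, u \in S -> exists x y,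
     [&& adj x y, good x y, x != y, key x == u & key y == u]) ->
  exists M : seq (X * X),
    [/\ size M = p, is_matching adj M & all (fun e => good e.1 e.2) M].
Proof.
move=> le_p_S blocks.
have build (s : seq K) : uniq s -> {subset s <= S} ->
  exists M : seq (X * X),
    [/\ size M = size s, is_matching adj M, all (fun e => good e.1 e.2) M &
        all (fun z => key z \in s) (flatten [seq [:: e.1; e.2] | e <- M])].
  elim: s => [|u s IHs] /=; first by exists [::].
  case/andP=> u_notin_s uniq_s sub_us.
  have [|M [sizeM /andP[adjM uniqM] goodM keysM]] := IHs uniq_s.
    by move=> v s_v; apply: sub_us; rewrite inE s_v orbT.
  have [x [y /and5P[adj_xy good_xy neq_xy /eqP key_x /eqP key_y]]] :=
    blocks u (sub_us u (mem_head u s)).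
  have fresh z : key z = u -> z \notin flatten [seq [:: e.1; e.2] | e <- M].
    by move=> key_z; apply: contra u_notin_s => /(allP keysM); rewrite key_z.
  exists ((x, y) :: M); rewrite /is_matching /= sizeM adj_xy adjM uniqM.
  rewrite good_xy goodM inE negb_or neq_xy !fresh // !inE key_x key_y eqxx.
  split=> //; apply/allP=> z z_M; by rewrite inE (allP keysM z z_M) orbT.
have [|M [sizeM matchM goodM _]] := build _ (take_uniq p (enum_uniq S)).
  by move=> u /mem_take; rewrite mem_enum.
by exists M; rewrite sizeM size_takel // -cardE.
Qed.

Lemma role_eq0 (X : finType) (V1 V2 : {set X}) (x : X) :
  (role V1 V2 x == 0) = (x \notin V1 :|: V2).
Proof. by rewrite /role inE; case: (x \in V1); case: (x \in V2). Qed.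

Lemma neq_of_role_neq (X : finType) (V1 V2 : {set X}) (x y : X) :
  role V1 V2 x != role V1 V2 y -> x != y.
Proof. by apply: contraNneq => ->. Qed.

Lemma card_role_class (X : finType) (V1 V2 : {set X}) (c : nat) :
  c != 0 -> #|[set x | role V1 V2 x == c]| <= maxn #|V1| #|V2|.
Proof.
move=> c_neq0; rewrite leq_max; apply/orP.
case: c c_neq0 => [|[|[|c]]] // _; [left | right | left];
  apply/subset_leq_card/subsetP=> x; rewrite inE /role;
  by case: (x \in V1); case: (x \in V2).
Qed.

Section GridRoles.

Variables (T : finType) (eT : rel T) (m : nat) (eH : rel 'I_m).
Variables (V1 V2 : {set T * 'I_m}).

Local Notation rl := (role V1 V2).

Definition mixed_rows : {set T} :=
  [set u | [exists i, exists j, eH i j && (rl (u, i) != rl (u, j))]].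

Definition mixed_cols : {set 'I_m} :=
  [set i | [exists v, exists w, eT v w && (rl (v, i) != rl (w, i))]].

Lemma matching_of_mixed_rows (p : nat) :
  p <= #|mixed_rows| ->
  exists M : seq ((T * 'I_m) * (T * 'I_m)),
    [/\ size M = p, is_matching (TH_adj eT eH) M &
        all (fun e => rl e.1 != rl e.2) M].
Proof.
move=> le_p_rows.
apply: (matching_of_blocks (key := fst) (good := fun x y => rl x != rl y)
          le_p_rows) => u.
rewrite inE => /existsP[i /existsP[j /andP[eH_ij rl_ij]]].
exists (u, i), (u, j).
by rewrite /TH_adj /= eqxx eH_ij rl_ij (neq_of_role_neq rl_ij).
Qed.

Lemma matching_of_mixed_cols (p : nat) :
  p <= #|mixed_cols| ->
  exists M : seq ((T * 'I_m) * (T * 'I_m)),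
    [/\ size M = p, is_matching (TH_adj eT eH) M &
        all (fun e => rl e.1 != rl e.2) M].
Proof.
move=> le_p_cols.
apply: (matching_of_blocks (key := snd) (good := fun x y => rl x != rl y)
          le_p_cols) => i.
rewrite inE => /existsP[v /existsP[w /andP[eT_vw rl_vw]]].
exists (v, i), (w, i).
by rewrite /TH_adj /= eqxx eT_vw rl_vw (neq_of_role_neq rl_vw) orbT.
Qed.

Hypothesis connT : forall v w, connect eT v w.
Hypothesis connH : forall i j, connect eH i j.

Lemma role_unmixed_row (u : T) (i j : 'I_m) :
  u \notin mixed_rows -> rl (u, i) = rl (u, j).
Proof.
move=> u_unmixed.
apply: (connect_invariant (f := fun k => rl (u, k))) => // k l eH_kl.
apply/eqP; apply: contraNT u_unmixed => rl_kl; rewrite inE.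
by apply/existsP; exists k; apply/existsP; exists l; rewrite eH_kl.
Qed.

Lemma role_unmixed_col (i : 'I_m) (v w : T) :
  i \notin mixed_cols -> rl (v, i) = rl (w, i).
Proof.
move=> i_unmixed.
apply: (connect_invariant (f := fun z => rl (z, i))) => // a b eT_ab.
apply/eqP; apply: contraNT i_unmixed => rl_ab; rewrite inE.
by apply/existsP; exists a; apply/existsP; exists b; rewrite eT_ab.
Qed.

Lemma role_off_mixed (u0 : T) (i0 : 'I_m) (x : T * 'I_m) :
  u0 \notin mixed_rows -> i0 \notin mixed_cols ->
  x \notin setX mixed_rows mixed_cols -> rl x = rl (u0, i0).
Proof.
case: x => v j u0_unmixed i0_unmixed.
rewrite inE negb_and => /orP[v_unmixed|j_unmixed].
  by rewrite (role_unmixed_row j i0 v_unmixed); apply: role_unmixed_col.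
by rewrite (role_unmixed_col v u0 j_unmixed); apply: role_unmixed_row.
Qed.

Lemma card_role_class_ge (u0 : T) (i0 : 'I_m) :
  u0 \notin mixed_rows -> i0 \notin mixed_cols ->
  #|[set: T * 'I_m]| - #|mixed_rows| * #|mixed_cols|
    <= #|[set x | rl x == rl (u0, i0)]|.
Proof.
move=> u0_unmixed i0_unmixed.
rewrite -cardsX cardsT -(cardsC (setX mixed_rows mixed_cols)) addKn.
apply/subset_leq_card/subsetP=> x; rewrite !inE => x_off.
by rewrite (role_off_mixed u0_unmixed i0_unmixed) ?inE.
Qed.

Lemma role_unmixed_row_neq0 (V : {set T * 'I_m}) (u : T) (i : 'I_m) :
  OC V = [set: T] -> V1 :|: V2 = V -> u \notin mixed_rows -> rl (u, i) != 0.
Proof.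
move=> OC_V defV u_unmixed.
have : u \in OC V by rewrite OC_V inE.
rewrite inE => /existsP[j u_j].
by rewrite (role_unmixed_row i j u_unmixed) role_eq0 defV u_j.
Qed.

End GridRoles.

Theorem lemma2 (p : nat) (T : finType) (eT : rel T) (m : nat) (eH : rel 'I_m)
  (V V1 V2 : {set T * 'I_m}) :
  is_tree eT -> p <= #|T| ->
  simple_graph eH -> connected_graph eH -> 2 * p <= m ->
  OC V = [set: T] ->
  V1 :|: V2 = V -> [disjoint V1 & V2] ->
  #|V1| <= #|[set: T * 'I_m]| - p ^ 2 ->
  #|V2| <= #|[set: T * 'I_m]| - p ^ 2 ->
  exists M : seq ((T * 'I_m) * (T * 'I_m)),
    [/\ size M = p, is_matching (TH_adj eT eH) M &
        all (fun e => role V1 V2 e.1 != role V1 V2 e.2) M].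
Proof.
move=> [_ [_ connT] _] le_p_T _ [_ connH] le_2p_m OC_V defV _ card_V1 card_V2.
have [le_p_rows|lt_rows_p] := leqP p #|mixed_rows eH V1 V2|.
  exact: matching_of_mixed_rows.
have [le_p_cols|lt_cols_p] := leqP p #|mixed_cols eT V1 V2|.
  exact: matching_of_mixed_cols.
exfalso.
have /card_gt0P[u0] : 0 < #|~: mixed_rows eH V1 V2|.
  by rewrite cardsCs setCK; lia.
have /card_gt0P[i0] : 0 < #|~: mixed_cols eT V1 V2|.
  by rewrite cardsCs setCK card_ord; lia.
rewrite !in_setC => i0_unmixed u0_unmixed.
set W := [set x | role V1 V2 x == role V1 V2 (u0, i0)].
have W_gt0 : 0 < #|W| by apply/card_gt0P; exists (u0, i0); rewrite inE.
have W_le : #|W| <= #|[set: T * 'I_m]| - p ^ 2.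
  have c_neq0 := role_unmixed_row_neq0 connH i0 OC_V defV u0_unmixed.
  apply: leq_trans (card_role_class V1 V2 c_neq0) _.
  by rewrite geq_max card_V1.
have W_ge : #|[set: T * 'I_m]| - #|mixed_rows eH V1 V2| * #|mixed_cols eT V1 V2|
    <= #|W| := card_role_class_ge connT connH u0_unmixed i0_unmixed.
have : #|mixed_rows eH V1 V2| * #|mixed_cols eT V1 V2| < p ^ 2.
  by rewrite -mulnn ltn_mul.
lia.
Qed.
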